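(* Let $m>1$. There is $D_0>0$ and $C>0$ such that for every real $\widehat d\ge D_0$ and all continuous $2\pi$-periodic functions $\phi,\varphi$ on $\mathbb{R}$ with $\int_0^{2\pi}\varphi=0$, the system $$\begin{cases}-(m+1)f+(f''-g')+\widehat d(f+g')=\phi & \text{on }(0,2\pi),\\ g+(f'-g)-\widehat d(f'+g'')=\varphi&\text{on }(0,2\pi),\\ f(0)=f(2\pi),\ f'(0)=f'(2\pi),\ g(0)=g(2\pi),\ g'(0)=g'(2\pi)\end{cases}$$ has a unique solution $(f,g)\in C^2([0,2\pi])^2$ with $\int_0^{2\pi}g=0$, and $$\|f\|_{C^2([0,2\pi])}+\|g\|_{C^2([0,2\pi])}\le C\big(\|\phi\|_{C^0([0,2\pi])}+\|\varphi\|_{C^0([0,2\pi])}\big).$$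
   Context: In the paper $\widehat d=-\frac{\Psi'(d)}{\Psi(d)}d$ where $d\sim m\ln K\to\infty$, so ''$\widehat d$ large'' corresponds to ''$K$ sufficiently large''; the constant $C$ does not depend on $\widehat d$. *)

From Stdlib Require Import Reals Lra ClassicalEpsilon.
Open Scope R_scope.

Definition periodic2pi (h : R -> R) : Prop := forall x, h (x + 2 * PI) = h x.

Definition cont_on_cc (h : R -> R) (a b : R) : Prop :=
  forall x, a <= x <= b -> limit1_in h (fun y => a <= y <= b) (h x) x.

(* f is in C^2([a,b]) with first derivative f1 and second derivative f2:
   f is twice differentiable on (a,b), and f, f', f'' extend continuously
   to [a,b] (the extensions being f, f1, f2 restricted to [a,b]). *)
Definition C2_on (f f1 f2 : R -> R) (a b : R) : Prop :=
  cont_on_cc f a b /\ cont_on_cc f1 a b /\ cont_on_cc f2 a b /\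
  (forall x, a < x < b -> derivable_pt_lim f x (f1 x) /\ derivable_pt_lim f1 x (f2 x)).

(* sup norm on [a,b]: the least upper bound of |h| on [a,b] (chosen by epsilon;
   it is the genuine supremum whenever h is continuous on [a,b]) *)
Definition sup_abs (h : R -> R) (a b : R) : R :=
  epsilon (inhabits 0)
    (fun M => is_lub (fun y => exists x, a <= x <= b /\ y = Rabs (h x)) M).

Definition C0_norm (h : R -> R) (a b : R) : R := sup_abs h a b.

Definition C2_norm (f f1 f2 : R -> R) (a b : R) : R :=
  sup_abs f a b + sup_abs f1 a b + sup_abs f2 a b.

(* the boundary value problem of Lemma A.3, with f' = f1, f'' = f2, g' = g1, g'' = g2 *)
Definition solves (m d : R) (phi varphi f f1 f2 g g1 g2 : R -> R) : Prop :=
  C2_on f f1 f2 0 (2 * PI) /\ C2_on g g1 g2 0 (2 * PI) /\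
  (forall x, 0 < x < 2 * PI ->
     - (m + 1) * f x + (f2 x - g1 x) + d * (f x + g1 x) = phi x /\
     g x + (f1 x - g x) - d * (f1 x + g2 x) = varphi x) /\
  f 0 = f (2 * PI) /\ f1 0 = f1 (2 * PI) /\ g 0 = g (2 * PI) /\ g1 0 = g1 (2 * PI) /\
  (exists pr : Riemann_integrable g 0 (2 * PI), RiemannInt pr = 0).

(* The boundary value problem of Lemma A.3 reduces, after one integration of
   the second equation, to a scalar problem for f:
     (1 - d) f - d g' = V + c,  V(x) = int_0^x varphi,  and
     f'' - lam^2 f = phi + (d - 1)/d (V + c),  lam^2 = m - 1 + 1/d.
   Writing f'' - lam^2 f = (D - lam)(D + lam) f, f is obtained by solving two
   first-order problems y' = mu y + r, each of which has (for mu <> 0) an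
   explicit solution with y(0) = y(2 pi) (variation of constants).  The
   constant c is chosen so that int g' = 0 (this gives g(0) = g(2 pi)), and g
   is the primitive of g' normalised to have mean zero.

   The solution of
   the system is then constructed and bounded uniformly for d >= m + 2, since
   lam stays in [(m-1)/(m+1), m+1].  Uniqueness follows by showing the
   homogeneous problem has only the zero solution: the same first integral
   reduces it to U'' = lam^2 U, whose periodic solutions vanish. *)

From Coquelicot Require Import Coquelicot.
From Stdlib Require Import Reals Lra ClassicalEpsilon.
Open Scope R_scope.

Lemma derive_plus (f g : R -> R) x a b : is_derive f x a -> is_derive g x b ->
  is_derive (fun t => f t + g t) x (a + b).
Proof. intros; apply (is_derive_plus f g x a b); auto. Qed.

Lemma derive_minus (f g : R -> R) x a b : is_derive f x a -> is_derive g x b ->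
  is_derive (fun t => f t - g t) x (a - b).
Proof. intros; apply (is_derive_minus f g x a b); auto. Qed.

Lemma derive_mult (f g : R -> R) x a b : is_derive f x a -> is_derive g x b ->
  is_derive (fun t => f t * g t) x (a * g x + f x * b).
Proof. apply Derive.is_derive_mult. Qed.

Lemma derive_const (c x : R) : is_derive (fun _ => c) x 0.
Proof. apply (is_derive_const c x). Qed.

Lemma derive_eq (f : R -> R) (x a b : R) : is_derive f x a -> a = b -> is_derive f x b.
Proof. intros H ->; exact H. Qed.

Lemma derive_exp_lin (a x : R) : is_derive (fun t => exp (a * t)) x (a * exp (a * x)).
Proof. auto_derive; auto; ring. Qed.

Lemma derive_continuous (f : R -> R) x a : is_derive f x a -> continuous f x.
Proof.
  intros H; apply (ex_derive_continuous (K:=R_AbsRing) (V:=R_NormedModule) f x).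
  exists a; exact H.
Qed.

Lemma cont_plus (f g : R -> R) x : continuous f x -> continuous g x ->
  continuous (fun y => f y + g y) x.
Proof. intros; apply (continuous_plus f g); auto. Qed.

Lemma cont_minus (f g : R -> R) x : continuous f x -> continuous g x ->
  continuous (fun y => f y - g y) x.
Proof. intros; apply (continuous_minus f g); auto. Qed.

Lemma cont_mult (f g : R -> R) x : continuous f x -> continuous g x ->
  continuous (fun y => f y * g y) x.
Proof. intros; apply (continuous_mult f g); auto. Qed.

Lemma cont_const (c x : R) : continuous (fun _ => c) x.
Proof. apply continuous_const. Qed.

Lemma cont_scal (f : R -> R) k x : continuous f x -> continuous (fun y => k * f y) x.
Proof. intros; apply cont_mult; auto; apply cont_const. Qed.

Lemma cont_div (f : R -> R) k x : continuous f x -> continuous (fun y => f y / k) x.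
Proof. intros; apply cont_mult; auto; apply cont_const. Qed.

Lemma cont_opp (f : R -> R) x : continuous f x -> continuous (fun y => - f y) x.
Proof. intros; apply (continuous_opp f); auto. Qed.

Ltac cont_tac :=
  repeat first [ solve [eauto] | apply cont_const | apply cont_plus | apply cont_minus
               | apply cont_opp | apply cont_scal | apply cont_div ].

Lemma ex_RInt_cont (h : R -> R) a b : (forall x, continuous h x) -> ex_RInt h a b.
Proof. intros; apply (ex_RInt_continuous (V:=R_CompleteNormedModule)); auto. Qed.

Lemma RInt_extR (f g : R -> R) a b : (forall x, f x = g x) -> RInt f a b = RInt g a b.
Proof. intros H; apply (RInt_ext (V:=R_CompleteNormedModule)); intros; apply H. Qed.

Lemma RInt_plusR (f g : R -> R) a b : ex_RInt f a b -> ex_RInt g a b ->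
  RInt (fun x => f x + g x) a b = RInt f a b + RInt g a b.
Proof. intros; apply (RInt_plus (V:=R_CompleteNormedModule) f g); auto. Qed.

Lemma RInt_minusR (f g : R -> R) a b : ex_RInt f a b -> ex_RInt g a b ->
  RInt (fun x => f x - g x) a b = RInt f a b - RInt g a b.
Proof. intros; apply (RInt_minus (V:=R_CompleteNormedModule) f g); auto. Qed.

Lemma RInt_scalR (f : R -> R) k a b : ex_RInt f a b ->
  RInt (fun x => k * f x) a b = k * RInt f a b.
Proof. intros; apply (RInt_scal (V:=R_CompleteNormedModule) f); auto. Qed.

Lemma RInt_constR (c a b : R) : RInt (fun _ => c) a b = c * (b - a).
Proof.
  rewrite (RInt_const (V:=R_CompleteNormedModule)).
  unfold scal; simpl; unfold mult; simpl. apply Rmult_comm.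
Qed.

Lemma RInt_divR (f : R -> R) k a b : ex_RInt f a b ->
  RInt (fun x => f x / k) a b = RInt f a b / k.
Proof.
  intros H. rewrite (RInt_extR _ (fun x => / k * f x)) by (intros; unfold Rdiv; ring).
  rewrite RInt_scalR by exact H. apply Rmult_comm.
Qed.

Lemma derive_primitive (h : R -> R) : (forall x, continuous h x) ->
  forall x, is_derive (fun y => RInt h 0 y) x (h x).
Proof.
  intros Hc x. apply (is_derive_RInt h (fun y => RInt h 0 y) 0 x); auto.
  apply filter_forall; intros y.
  apply (RInt_correct (V:=R_CompleteNormedModule)), ex_RInt_cont; auto.
Qed.

Lemma primitive_bound (h : R -> R) M x : (forall x, continuous h x) ->
  (forall t, 0 <= t <= 2 * PI -> Rabs (h t) <= M) -> 0 <= x <= 2 * PI ->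
  Rabs (RInt h 0 x) <= 2 * PI * M.
Proof.
  intros Hc HM Hx.
  assert (HM0 : 0 <= M) by (apply Rle_trans with (Rabs (h 0)); [apply Rabs_pos | apply HM; lra]).
  eapply Rle_trans.
  - apply abs_RInt_le_const; [lra | apply ex_RInt_cont; auto | intros t Ht; apply HM; lra].
  - apply Rmult_le_compat_r; lra.
Qed.

Lemma abs_mult_le k y K B : Rabs k <= K -> Rabs y <= B -> Rabs (k * y) <= K * B.
Proof. intros. rewrite Rabs_mult. apply Rmult_le_compat; auto; apply Rabs_pos. Qed.

Lemma abs_minus_le a b : Rabs (a - b) <= Rabs a + Rabs b.
Proof. unfold Rminus. eapply Rle_trans. apply Rabs_triang. rewrite Rabs_Ropp. lra. Qed.

Lemma abs_div_le a b B : 0 < b -> Rabs a <= B * b -> Rabs (a / b) <= B.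
Proof.
  intros Hb H. unfold Rdiv. rewrite Rabs_mult, Rabs_inv, (Rabs_pos_eq b) by lra.
  apply (Rmult_le_reg_r b); auto. rewrite Rmult_assoc, Rinv_l by lra. lra.
Qed.

Lemma sup_abs_lub h a b B : a <= b -> (forall x, a <= x <= b -> Rabs (h x) <= B) ->
  is_lub (fun y => exists x, a <= x <= b /\ y = Rabs (h x)) (sup_abs h a b).
Proof.
  intros Hab HB. unfold sup_abs. apply epsilon_spec.
  destruct (completeness (fun y => exists x, a <= x <= b /\ y = Rabs (h x))) as [M HM].
  - exists B. intros y [x [Hx ->]]. auto.
  - exists (Rabs (h a)). exists a. split; auto; lra.
  - exists M; auto.
Qed.

Lemma sup_abs_le h a b B : a <= b -> (forall x, a <= x <= b -> Rabs (h x) <= B) ->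
  sup_abs h a b <= B.
Proof.
  intros Hab HB. destruct (sup_abs_lub h a b B Hab HB) as [_ H].
  apply H. intros y [x [Hx ->]]. auto.
Qed.

Lemma C0_norm_ge (h : R -> R) : (forall x, continuous h x) ->
  forall x, 0 <= x <= 2 * PI -> Rabs (h x) <= C0_norm h 0 (2 * PI).
Proof.
  intros Hc x Hx. pose proof PI_RGT_0.
  destruct (continuity_ab_maj (fun x => Rabs (h x)) 0 (2 * PI)) as [M [HM _]]; [lra | |].
  { intros c _. apply (continuity_pt_comp h Rabs); [|apply Rcontinuity_abs].
    apply continuity_pt_filterlim, Hc. }
  destruct (sup_abs_lub h 0 (2 * PI) (Rabs (h M))) as [Hub _]; auto; [lra|].
  apply Hub. exists x; auto.
Qed.

Lemma cc_of_continuous (h : R -> R) a b : (forall x, continuous h x) -> cont_on_cc h a b.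
Proof.
  intros H x _ eps Heps.
  destruct (proj2 (continuity_pt_filterlim h x) (H x) eps Heps) as [alp [Ha Hc]].
  exists alp; split; auto. intros y [_ Hd].
  destruct (Req_dec y x) as [->|Hne].
  - simpl. unfold R_dist. rewrite Rminus_diag, Rabs_R0; auto.
  - apply Hc. repeat split; auto.
Qed.

Lemma cc_minus f g a b : cont_on_cc f a b -> cont_on_cc g a b ->
  cont_on_cc (fun x => f x - g x) a b.
Proof. intros Hf Hg x Hx. apply limit_minus; auto. Qed.

Lemma cc_plus f g a b : cont_on_cc f a b -> cont_on_cc g a b ->
  cont_on_cc (fun x => f x + g x) a b.
Proof. intros Hf Hg x Hx. apply limit_plus; auto. Qed.

Lemma cc_mult f g a b : cont_on_cc f a b -> cont_on_cc g a b ->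
  cont_on_cc (fun x => f x * g x) a b.
Proof. intros Hf Hg x Hx. apply limit_mul; auto. Qed.

Lemma cc_const c a b : cont_on_cc (fun _ => c) a b.
Proof. apply cc_of_continuous; intros; apply cont_const. Qed.

Lemma cc_scal k f a b : cont_on_cc f a b -> cont_on_cc (fun x => k * f x) a b.
Proof. intros; apply cc_mult; auto; apply cc_const. Qed.

Lemma open_interval_dense a b x alp : a < b -> a <= x <= b -> 0 < alp ->
  exists y, a < y < b /\ Rabs (y - x) < alp.
Proof.
  intros Hab Hx Halp.
  set (t := Rmin alp (b - a) / 4).
  assert (0 < Rmin alp (b - a)) by (apply Rmin_pos; lra).
  pose proof (Rmin_l alp (b - a)). pose proof (Rmin_r alp (b - a)).
  destruct (Rle_lt_dec x ((a + b) / 2)).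
  - exists (x + t). rewrite Rabs_pos_eq; unfold t; lra.
  - exists (x - t). rewrite Rabs_left; unfold t; lra.
Qed.

Lemma cc_const_on_interior h a b K : a < b -> cont_on_cc h a b ->
  (forall y, a < y < b -> h y = K) -> forall x, a <= x <= b -> h x = K.
Proof.
  intros Hab Hc HK x Hx.
  apply (single_limit h (fun y => a < y < b) (h x) K x).
  - intros alp Halp. destruct (open_interval_dense a b x alp) as [y [Hy Hd]]; auto.
    exists y; split; auto.
  - intros eps Heps. destruct (Hc x Hx eps Heps) as [alp [Ha Hl]].
    exists alp; split; auto. intros y [Hy Hd]. apply Hl; split; [lra | auto].
  - intros eps Heps. exists 1; split; [lra|]. intros y [Hy _].
    rewrite (HK y Hy). simpl. unfold R_dist. rewrite Rminus_diag, Rabs_R0; auto.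
Qed.

Lemma zero_derivative_const (h : R -> R) a b : a < b ->
  (forall x, a < x < b -> is_derive h x 0) -> cont_on_cc h a b ->
  forall x y, a <= x <= b -> a <= y <= b -> h x = h y.
Proof.
  intros Hab Hd Hc.
  assert (Hint : forall x, a < x < b -> h x = h ((a + b) / 2)).
  { assert (K : forall x y, a < x < b -> a < y < b -> x < y -> h x = h y).
    { intros x y Hx Hy Hxy. destruct (MVT_cor2 h (fun _ => 0) x y Hxy) as [c [Hc' _]].
      - intros c Hcxy. apply is_derive_Reals, Hd. lra.
      - lra. }
    intros x Hx. destruct (Rtotal_order x ((a + b) / 2)) as [H|[H|H]].
    - apply K; lra.
    - subst; auto.
    - symmetry; apply K; lra. }
  intros x y Hx Hy.
  rewrite (cc_const_on_interior h a b _ Hab Hc Hint x Hx).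
  rewrite (cc_const_on_interior h a b _ Hab Hc Hint y Hy). reflexivity.
Qed.

Lemma exp_inv_mul (a b : R) : exp (a * b) * exp (- a * b) = 1.
Proof. rewrite <- exp_plus. replace (a * b + - a * b) with 0 by ring. apply exp_0. Qed.

Lemma one_minus_exp_neq0 mu : mu <> 0 -> 1 - exp (2 * PI * mu) <> 0.
Proof.
  intros Hmu He. assert (Hexp : exp (2 * PI * mu) = exp 0) by (rewrite exp_0; lra).
  apply exp_inv in Hexp. pose proof PI_RGT_0. apply Hmu. nra.
Qed.

Lemma periodic_exp_solution_zero (y : R -> R) mu : mu <> 0 ->
  cont_on_cc y 0 (2 * PI) -> (forall x, 0 < x < 2 * PI -> is_derive y x (mu * y x)) ->
  y 0 = y (2 * PI) -> forall x, 0 <= x <= 2 * PI -> y x = 0.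
Proof.
  intros Hmu Hc Hd Hper x Hx. pose proof PI_RGT_0.
  set (P := fun t => exp (- mu * t) * y t).
  assert (HP : forall s t, 0 <= s <= 2 * PI -> 0 <= t <= 2 * PI -> P s = P t).
  { apply zero_derivative_const; [lra | |].
    - intros t Ht. eapply derive_eq.
      + apply derive_mult; [apply derive_exp_lin | apply Hd; auto].
      + simpl. ring.
    - apply cc_mult; auto. apply cc_of_continuous.
      intros t; exact (derive_continuous _ _ _ (derive_exp_lin (- mu) t)). }
  assert (Hy0 : y 0 = 0).
  { pose proof (HP 0 (2 * PI) ltac:(lra) ltac:(lra)) as E. unfold P in E.
    rewrite Rmult_0_r, exp_0, <- Hper in E.
    pose proof (one_minus_exp_neq0 (- mu) ltac:(lra)).
    replace (- mu * (2 * PI)) with (2 * PI * - mu) in E by ring.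
    apply (Rmult_eq_reg_l (1 - exp (2 * PI * - mu))); auto. lra. }
  pose proof (HP x 0 Hx ltac:(lra)) as E. unfold P in E.
  rewrite Rmult_0_r, exp_0, Hy0 in E. pose proof (exp_pos (- mu * x)). nra.
Qed.

(* The periodic solution operator for y' = mu y + r on [0, 2 pi]:
   y(x) = e^{mu x} (y0 + int_0^x e^{-mu t} r(t) dt), where the initial value
   y0 = e^{2 pi mu} J / (1 - e^{2 pi mu}), J = int_0^{2 pi} e^{-mu t} r(t) dt,
   is the one making y(0) = y(2 pi). *)

Section PeriodicSolution.

Variables (mu : R) (r : R -> R).
Hypothesis r_cont : forall x, continuous r x.

Definition per_sol_init : R :=
  exp (2 * PI * mu) * RInt (fun t => exp (- mu * t) * r t) 0 (2 * PI)
  / (1 - exp (2 * PI * mu)).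

Definition per_sol (x : R) : R :=
  exp (mu * x) * (per_sol_init + RInt (fun t => exp (- mu * t) * r t) 0 x).

Lemma weighted_cont : forall x, continuous (fun t => exp (- mu * t) * r t) x.
Proof.
  intros x. apply cont_mult; auto.
  apply (derive_continuous _ _ _ (derive_exp_lin (- mu) x)).
Qed.

Lemma per_sol_derive : forall x, is_derive per_sol x (mu * per_sol x + r x).
Proof.
  intros x. unfold per_sol. eapply derive_eq.
  - apply derive_mult; [apply derive_exp_lin|].
    apply derive_plus; [apply derive_const | apply derive_primitive, weighted_cont].
  - simpl. pose proof (exp_inv_mul mu x) as E.
    transitivity (mu * (exp (mu * x) * (per_sol_init
       + RInt (fun t => exp (- mu * t) * r t) 0 x)) + (exp (mu * x) * exp (- mu * x)) * r x).
    + ring.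
    + rewrite E; ring.
Qed.

Lemma per_sol_cont : forall x, continuous per_sol x.
Proof. intros x; eapply derive_continuous, per_sol_derive. Qed.

Lemma per_sol_periodic : mu <> 0 -> per_sol 0 = per_sol (2 * PI).
Proof.
  intros Hmu. pose proof (one_minus_exp_neq0 mu Hmu). unfold per_sol, per_sol_init.
  rewrite RInt_point. unfold zero; simpl. rewrite Rmult_0_r, exp_0.
  replace (mu * (2 * PI)) with (2 * PI * mu) by ring. field; auto.
Qed.

End PeriodicSolution.

(* Gain of the solution operator on [0, 2 pi] when |mu| <= L and
   |1 - e^{2 pi mu}| >= del. *)
Definition per_sol_gain (L del : R) : R :=
  exp (2 * PI * L) * (exp (2 * PI * L) * (2 * PI * exp (2 * PI * L)) / del
                      + 2 * PI * exp (2 * PI * L)).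

Lemma per_sol_gain_pos L del : 0 < del -> 0 < per_sol_gain L del.
Proof.
  intros Hd. unfold per_sol_gain. pose proof PI_RGT_0.
  set (A := exp (2 * PI * L)). assert (0 < A) by apply exp_pos.
  assert (0 < 2 * PI * A) by (apply Rmult_lt_0_compat; lra).
  apply Rmult_lt_0_compat; auto. apply Rplus_lt_0_compat; auto.
  apply Rdiv_lt_0_compat; auto. apply Rmult_lt_0_compat; auto.
Qed.

Lemma exp_le_on_period mu L t : Rabs mu <= L -> 0 <= t <= 2 * PI ->
  exp (mu * t) <= exp (2 * PI * L).
Proof.
  intros HL Ht.
  assert (Hle : mu * t <= 2 * PI * L).
  { assert (mu * t <= Rabs mu * t) by (apply Rmult_le_compat_r; [lra | apply Rle_abs]).
    assert (0 <= Rabs mu) by apply Rabs_pos.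
    assert (Rabs mu * t <= L * (2 * PI)) by (apply Rmult_le_compat; lra). lra. }
  destruct (Req_dec (mu * t) (2 * PI * L)) as [E|E].
  - rewrite E; lra.
  - left. apply exp_increasing. lra.
Qed.

Lemma per_sol_bound mu r L del M : (forall x, continuous r x) -> Rabs mu <= L -> 0 < del ->
  del <= Rabs (1 - exp (2 * PI * mu)) ->
  (forall t, 0 <= t <= 2 * PI -> Rabs (r t) <= M) ->
  forall x, 0 <= x <= 2 * PI -> Rabs (per_sol mu r x) <= per_sol_gain L del * M.
Proof.
  intros Hr HL Hd Hdel HM x Hx. pose proof PI_RGT_0 as Hpi.
  set (A := exp (2 * PI * L)).
  assert (HM0 : 0 <= M) by (apply Rle_trans with (Rabs (r 0)); [apply Rabs_pos | apply HM; lra]).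
  assert (HA : 0 < A) by apply exp_pos.
  assert (Hw : forall t, 0 <= t <= 2 * PI -> Rabs (exp (- mu * t) * r t) <= A * M).
  { intros t Ht. rewrite Rabs_mult, (Rabs_pos_eq (exp _)) by (left; apply exp_pos).
    apply Rmult_le_compat; [left; apply exp_pos | apply Rabs_pos | | auto].
    apply exp_le_on_period; auto. rewrite Rabs_Ropp; auto. }
  assert (HI : forall y, 0 <= y <= 2 * PI ->
     Rabs (RInt (fun t => exp (- mu * t) * r t) 0 y) <= 2 * PI * (A * M)).
  { intros y Hy. apply primitive_bound; auto. apply weighted_cont; auto. }
  assert (HE : exp (2 * PI * mu) <= A).
  { rewrite Rmult_comm. apply exp_le_on_period; auto; lra. }
  assert (Hy0 : Rabs (per_sol_init mu r) <= A * (2 * PI * (A * M)) / del).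
  { unfold per_sol_init, Rdiv. rewrite !Rabs_mult, Rabs_inv.
    rewrite (Rabs_pos_eq (exp _)) by (left; apply exp_pos).
    apply Rmult_le_compat.
    - apply Rmult_le_pos; [left; apply exp_pos | apply Rabs_pos].
    - left; apply Rinv_0_lt_compat; lra.
    - apply Rmult_le_compat; try (left; apply exp_pos); try apply Rabs_pos; auto.
      apply HI; lra.
    - apply Rinv_le_contravar; lra. }
  unfold per_sol. rewrite Rabs_mult, (Rabs_pos_eq (exp _)) by (left; apply exp_pos).
  unfold per_sol_gain. fold A.
  replace ((A * (A * (2 * PI * A) / del + 2 * PI * A)) * M) with
     (A * (A * (2 * PI * (A * M)) / del + 2 * PI * (A * M))) by (field; lra).
  apply Rmult_le_compat; [left; apply exp_pos | apply Rabs_pos | apply exp_le_on_period; auto |].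
  eapply Rle_trans; [apply Rabs_triang | apply Rplus_le_compat; auto].
Qed.

Section Construction.

Variables (m d : R) (phi varphi : R -> R).
Hypothesis hm : 1 < m.
Hypothesis hd : m + 2 <= d.
Hypothesis phi_cont : forall x, continuous phi x.
Hypothesis varphi_cont : forall x, continuous varphi x.
Hypothesis varphi_mean : RInt varphi 0 (2 * PI) = 0.

(* lam^2 = m - 1 + 1/d is the coefficient of the reduced equation for f. *)
Definition lam : R := sqrt (m - 1 + / d).

Definition prim_varphi (x : R) : R := RInt varphi 0 x.

(* The integration constant of the first integral, fixed so that int g' = 0. *)
Definition first_integral_const : R :=
  - RInt prim_varphi 0 (2 * PI) / (2 * PI)
  - (d - 1) / (d - m - 1) * RInt phi 0 (2 * PI) / (2 * PI).

(* Right-hand side of the reduced equation f'' - lam^2 f = rhs. *)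
Definition rhs (x : R) : R := phi x + (d - 1) / d * (prim_varphi x + first_integral_const).

(* q = f' + lam f solves q' = lam q + rhs, and f solves f' = - lam f + q. *)
Definition sol_q : R -> R := per_sol lam rhs.
Definition sol_f : R -> R := per_sol (- lam) sol_q.
Definition sol_f1 (x : R) : R := - lam * sol_f x + sol_q x.
Definition sol_f2 (x : R) : R := lam * lam * sol_f x + rhs x.

(* g' is read off from the first integral (1 - d) f - d g' = V + c. *)
Definition sol_g1 (x : R) : R :=
  ((1 - d) * sol_f x - prim_varphi x - first_integral_const) / d.
Definition sol_g2 (x : R) : R := ((1 - d) * sol_f1 x - varphi x) / d.
Definition prim_g1 (x : R) : R := RInt sol_g1 0 x.
Definition sol_g (x : R) : R := prim_g1 x - RInt prim_g1 0 (2 * PI) / (2 * PI).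

Lemma lam_sq : lam * lam = m - 1 + / d.
Proof.
  unfold lam. apply sqrt_sqrt.
  assert (0 < / d) by (apply Rinv_0_lt_compat; lra). lra.
Qed.

Lemma lam_pos : 0 < lam.
Proof.
  unfold lam. apply sqrt_lt_R0.
  assert (0 < / d) by (apply Rinv_0_lt_compat; lra). lra.
Qed.

Lemma prim_varphi_derive : forall x, is_derive prim_varphi x (varphi x).
Proof. apply derive_primitive; auto. Qed.

Lemma prim_varphi_cont : forall x, continuous prim_varphi x.
Proof. intros x; eapply derive_continuous, prim_varphi_derive. Qed.

Lemma rhs_cont : forall x, continuous rhs x.
Proof. intros x. unfold rhs. pose proof prim_varphi_cont. cont_tac. Qed.

Lemma sol_q_derive : forall x, is_derive sol_q x (lam * sol_q x + rhs x).
Proof. apply per_sol_derive, rhs_cont. Qed.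

Lemma sol_q_cont : forall x, continuous sol_q x.
Proof. apply per_sol_cont, rhs_cont. Qed.

Lemma sol_f_derive : forall x, is_derive sol_f x (sol_f1 x).
Proof. apply per_sol_derive, sol_q_cont. Qed.

Lemma sol_f_cont : forall x, continuous sol_f x.
Proof. apply per_sol_cont, sol_q_cont. Qed.

Lemma sol_f1_derive : forall x, is_derive sol_f1 x (sol_f2 x).
Proof.
  intros x. eapply derive_eq.
  - apply derive_plus; [apply is_derive_scal, sol_f_derive | apply sol_q_derive].
  - unfold sol_f1, sol_f2. ring.
Qed.

Lemma sol_f1_cont : forall x, continuous sol_f1 x.
Proof. intros x; eapply derive_continuous, sol_f1_derive. Qed.

Lemma sol_f2_cont : forall x, continuous sol_f2 x.
Proof. intros x. unfold sol_f2. pose proof sol_f_cont; pose proof rhs_cont. cont_tac. Qed.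

Lemma sol_g1_derive : forall x, is_derive sol_g1 x (sol_g2 x).
Proof.
  intros x. unfold sol_g1, Rdiv. eapply derive_eq.
  - apply (derive_mult (fun y => (1 - d) * sol_f y - prim_varphi y - first_integral_const)).
    + apply derive_minus; [apply derive_minus | apply derive_const].
      * apply is_derive_scal, sol_f_derive.
      * apply prim_varphi_derive.
    + apply derive_const.
  - unfold sol_g2. field. lra.
Qed.

Lemma sol_g1_cont : forall x, continuous sol_g1 x.
Proof. intros x; eapply derive_continuous, sol_g1_derive. Qed.

Lemma sol_g2_cont : forall x, continuous sol_g2 x.
Proof. intros x. unfold sol_g2. pose proof sol_f1_cont. cont_tac. Qed.

Lemma prim_g1_cont : forall x, continuous prim_g1 x.
Proof. intros x; eapply derive_continuous, derive_primitive, sol_g1_cont. Qed.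

Lemma sol_g_derive : forall x, is_derive sol_g x (sol_g1 x).
Proof.
  intros x. unfold sol_g. eapply derive_eq.
  - apply derive_minus; [apply derive_primitive, sol_g1_cont | apply derive_const].
  - ring.
Qed.

Lemma sol_g_cont : forall x, continuous sol_g x.
Proof. intros x; eapply derive_continuous, sol_g_derive. Qed.

Lemma sol_eq1 x : - (m + 1) * sol_f x + (sol_f2 x - sol_g1 x) + d * (sol_f x + sol_g1 x) = phi x.
Proof. unfold sol_f2, sol_g1, rhs. rewrite lam_sq. field. lra. Qed.

Lemma sol_eq2 x : sol_g x + (sol_f1 x - sol_g x) - d * (sol_f1 x + sol_g2 x) = varphi x.
Proof. unfold sol_g2. field. lra. Qed.

Lemma sol_q_periodic : sol_q 0 = sol_q (2 * PI).
Proof. apply per_sol_periodic. pose proof lam_pos. lra. Qed.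

Lemma sol_f_periodic : sol_f 0 = sol_f (2 * PI).
Proof. apply per_sol_periodic. pose proof lam_pos. lra. Qed.

Lemma sol_f1_periodic : sol_f1 0 = sol_f1 (2 * PI).
Proof. unfold sol_f1. rewrite sol_f_periodic, sol_q_periodic. reflexivity. Qed.

(* Since f' is periodic, int f'' = 0; this forces int g' = 0 thanks to the
   choice of the integration constant. *)
Lemma sol_f2_integral : RInt sol_f2 0 (2 * PI) = 0.
Proof.
  assert (Hr := is_RInt_derive (V:=R_CompleteNormedModule) sol_f1 sol_f2 0 (2 * PI)).
  apply is_RInt_unique in Hr.
  - rewrite Hr, <- sol_f1_periodic. unfold minus, plus, opp; simpl. ring.
  - intros; apply sol_f1_derive.
  - intros; apply sol_f2_cont.
Qed.

(* The algebra behind int g' = 0, with IP = int phi, IV = int V, IF = int f. *)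
Lemma first_integral_const_balance IP IV IF :
  0 = (m - 1 + / d) * IF + (IP + (d - 1) / d * (IV +
      (- IV / (2 * PI) - (d - 1) / (d - m - 1) * IP / (2 * PI)) * (2 * PI - 0))) ->
  ((1 - d) * IF - IV
   - (- IV / (2 * PI) - (d - 1) / (d - m - 1) * IP / (2 * PI)) * (2 * PI - 0)) / d = 0.
Proof.
  intros E. pose proof PI_RGT_0.
  assert (Hl : 0 < m - 1 + / d) by (assert (0 < / d) by (apply Rinv_0_lt_compat; lra); lra).
  assert (E1 : (m - 1 + / d) * IF = (m - 1 + / d) * (IP / (d - m - 1))).
  { transitivity (- (IP + (d - 1) / d * (IV +
      (- IV / (2 * PI) - (d - 1) / (d - m - 1) * IP / (2 * PI)) * (2 * PI - 0)))); [lra|].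
    field. repeat split; lra. }
  apply Rmult_eq_reg_l in E1; [|lra]. rewrite E1. field. repeat split; lra.
Qed.

Lemma sol_g1_integral : RInt sol_g1 0 (2 * PI) = 0.
Proof.
  pose proof PI_RGT_0. pose proof prim_varphi_cont. pose proof sol_f_cont.
  set (c := first_integral_const).
  assert (Irhs : RInt rhs 0 (2 * PI) =
     RInt phi 0 (2 * PI) + (d - 1) / d * (RInt prim_varphi 0 (2 * PI) + c * (2 * PI - 0))).
  { unfold rhs. fold c.
    rewrite RInt_plusR, RInt_scalR, RInt_plusR, RInt_constR; try reflexivity;
      apply ex_RInt_cont; intro; cont_tac. }
  assert (If2 : RInt sol_f2 0 (2 * PI) =
      lam * lam * RInt sol_f 0 (2 * PI) + RInt rhs 0 (2 * PI)).
  { unfold sol_f2. rewrite RInt_plusR, RInt_scalR; try reflexivity;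
      apply ex_RInt_cont; intro; cont_tac; apply rhs_cont. }
  unfold sol_g1. fold c.
  rewrite RInt_divR, !RInt_minusR, RInt_scalR, RInt_constR;
    try (apply ex_RInt_cont; intro; cont_tac).
  rewrite lam_sq, Irhs, sol_f2_integral in If2.
  revert If2. unfold c, first_integral_const.
  generalize (RInt phi 0 (2 * PI)) (RInt prim_varphi 0 (2 * PI)) (RInt sol_f 0 (2 * PI)).
  apply first_integral_const_balance.
Qed.

Lemma sol_g1_periodic : sol_g1 0 = sol_g1 (2 * PI).
Proof.
  unfold sol_g1. rewrite sol_f_periodic. unfold prim_varphi.
  rewrite RInt_point, varphi_mean. reflexivity.
Qed.

Lemma sol_g_periodic : sol_g 0 = sol_g (2 * PI).
Proof. unfold sol_g, prim_g1. rewrite sol_g1_integral, RInt_point. reflexivity. Qed.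

Lemma sol_g_integral : @eq R (RInt sol_g 0 (2 * PI)) 0.
Proof.
  pose proof PI_RGT_0. unfold sol_g.
  rewrite RInt_minusR, RInt_constR.
  - field. lra.
  - apply ex_RInt_cont, prim_g1_cont.
  - apply ex_RInt_cont; intros; apply cont_const.
Qed.

(* Uniform bounds.  For d >= m + 2, lam lies in [(m-1)/(m+1), m+1], so both
   first-order steps are non-resonant with a margin depending only on m. *)

Lemma inv_d_bounds : 0 < / d <= 1.
Proof.
  split; [apply Rinv_0_lt_compat; lra|].
  rewrite <- Rinv_1. apply Rinv_le_contravar; lra.
Qed.

Lemma lam_bounds : (m - 1) / (m + 1) <= lam <= m + 1.
Proof.
  pose proof lam_sq as E. pose proof lam_pos as P. pose proof inv_d_bounds.
  assert (U : lam <= m + 1) by nra.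
  split; auto. apply (Rmult_le_reg_r (m + 1)); [lra|].
  unfold Rdiv. rewrite Rmult_assoc, Rinv_l by lra. nra.
Qed.

Definition resonance_margin : R :=
  2 * PI * ((m - 1) / (m + 1)) / exp (2 * PI * (m + 1)).

Lemma resonance_margin_pos : 0 < resonance_margin.
Proof.
  unfold resonance_margin. pose proof PI_RGT_0. pose proof (exp_pos (2 * PI * (m + 1))).
  apply Rdiv_lt_0_compat; auto. apply Rmult_lt_0_compat; [lra|].
  apply Rdiv_lt_0_compat; lra.
Qed.

Lemma resonance_margin_le :
  resonance_margin <= Rabs (1 - exp (2 * PI * lam)) /\
  resonance_margin <= Rabs (1 - exp (2 * PI * - lam)).
Proof.
  pose proof lam_bounds as [L1 L2]. pose proof PI_RGT_0. pose proof resonance_margin_pos.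
  set (l := lam) in *. set (l0 := (m - 1) / (m + 1)) in *.
  assert (l0 > 0) by (unfold l0; apply Rdiv_lt_0_compat; lra).
  assert (E1 : 1 + 2 * PI * l < exp (2 * PI * l)) by (apply exp_ineq1; nra).
  assert (EE : exp (2 * PI * l) <= exp (2 * PI * (m + 1))).
  { destruct (Req_dec l (m + 1)) as [->|]; [lra|]. left; apply exp_increasing; nra. }
  set (E := exp (2 * PI * (m + 1))) in *.
  assert (HE : 0 < E) by apply exp_pos.
  assert (Hd2 : resonance_margin * E = 2 * PI * l0)
    by (unfold resonance_margin; fold l0 E; field; lra).
  assert (0 < 2 * PI * l) by (apply Rmult_lt_0_compat; lra).
  split.
  - rewrite Rabs_minus_sym, Rabs_pos_eq by lra.
    assert (resonance_margin <= resonance_margin * E) by nra.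
    assert (2 * PI * l0 <= 2 * PI * l) by nra. lra.
  - replace (2 * PI * - l) with (- (2 * PI * l)) by ring. rewrite exp_Ropp.
    set (e := exp (2 * PI * l)) in *.
    assert (0 < / e < 1).
    { split; [apply Rinv_0_lt_compat; lra|].
      rewrite <- Rinv_1. apply Rinv_lt_contravar; lra. }
    rewrite Rabs_pos_eq by lra.
    replace (1 - / e) with ((e - 1) / e) by (field; lra).
    apply (Rmult_le_reg_r e); [lra|].
    unfold Rdiv. rewrite Rmult_assoc, Rinv_l, Rmult_1_r by lra. nra.
Qed.

Definition C_gain : R := per_sol_gain (m + 1) resonance_margin.
Definition C_rhs : R := m + 2 + 4 * PI.
Definition C_q : R := C_gain * C_rhs.
Definition C_f : R := C_gain * C_q.
Definition C_f1 : R := (m + 1) * C_f + C_q.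
Definition C_f2 : R := m * C_f + C_rhs.
Definition C_g1 : R := C_f + 4 * PI + m + 1.
Definition C_g2 : R := C_f1 + 1.
Definition C_g : R := 4 * PI * C_g1.
Definition C_total : R := C_f + C_f1 + C_f2 + C_g + C_g1 + C_g2.

Lemma C_f_pos : 0 < C_f.
Proof.
  pose proof (per_sol_gain_pos (m + 1) _ resonance_margin_pos). pose proof PI_RGT_0.
  unfold C_f, C_q, C_rhs, C_gain.
  apply Rmult_lt_0_compat; [auto | apply Rmult_lt_0_compat; [auto | lra]].
Qed.

Lemma C_total_pos : 0 < C_total.
Proof.
  pose proof C_f_pos. pose proof (per_sol_gain_pos (m + 1) _ resonance_margin_pos).
  pose proof PI_RGT_0.
  assert (0 < C_q) by (unfold C_q, C_rhs, C_gain; apply Rmult_lt_0_compat; auto; lra).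
  assert (0 < (m + 1) * C_f) by (apply Rmult_lt_0_compat; lra).
  assert (0 < m * C_f) by (apply Rmult_lt_0_compat; lra).
  assert (0 < 4 * PI * C_g1) by (unfold C_g1; apply Rmult_lt_0_compat; lra).
  unfold C_total, C_g, C_g2, C_f1, C_f2, C_g1, C_rhs in *. lra.
Qed.

Section Bounds.

Variables Np Nv : R.
Hypothesis phi_bnd : forall t, 0 <= t <= 2 * PI -> Rabs (phi t) <= Np.
Hypothesis varphi_bnd : forall t, 0 <= t <= 2 * PI -> Rabs (varphi t) <= Nv.

Lemma data_bounds_nonneg : 0 <= Np /\ 0 <= Nv.
Proof.
  pose proof PI_RGT_0. split.
  - apply Rle_trans with (Rabs (phi 0)); [apply Rabs_pos | apply phi_bnd; lra].
  - apply Rle_trans with (Rabs (varphi 0)); [apply Rabs_pos | apply varphi_bnd; lra].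
Qed.

Lemma prim_varphi_bound x : 0 <= x <= 2 * PI -> Rabs (prim_varphi x) <= 2 * PI * Nv.
Proof. intros; apply primitive_bound; auto. Qed.

Lemma first_integral_const_bound : Rabs first_integral_const <= 2 * PI * Nv + (m + 1) * Np.
Proof.
  pose proof PI_RGT_0. pose proof data_bounds_nonneg as [N1 N2].
  assert (IV : Rabs (RInt prim_varphi 0 (2 * PI)) <= (2 * PI - 0) * (2 * PI * Nv)).
  { apply abs_RInt_le_const; [lra | apply ex_RInt_cont, prim_varphi_cont |].
    intros; apply prim_varphi_bound; auto. }
  assert (IP : Rabs (RInt phi 0 (2 * PI)) <= (2 * PI - 0) * Np).
  { apply abs_RInt_le_const; [lra | apply ex_RInt_cont; auto | auto]. }
  assert (Hr : Rabs ((d - 1) / (d - m - 1)) <= m + 1).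
  { rewrite Rabs_pos_eq by (left; apply Rdiv_lt_0_compat; lra).
    apply (Rmult_le_reg_r (d - m - 1)); [lra|].
    unfold Rdiv. rewrite Rmult_assoc, Rinv_l by lra. nra. }
  unfold first_integral_const. eapply Rle_trans; [apply abs_minus_le | apply Rplus_le_compat].
  - apply abs_div_le; [lra|]. rewrite Rabs_Ropp. nra.
  - apply abs_div_le; [lra|]. eapply Rle_trans; [apply abs_mult_le; [exact Hr | exact IP] | nra].
Qed.

Lemma rhs_bound x : 0 <= x <= 2 * PI -> Rabs (rhs x) <= C_rhs * (Np + Nv).
Proof.
  intros Hx. pose proof PI_RGT_0. pose proof data_bounds_nonneg as [N1 N2].
  pose proof (prim_varphi_bound x Hx). pose proof first_integral_const_bound.
  assert (Hk : Rabs ((d - 1) / d) <= 1).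
  { rewrite Rabs_pos_eq by (left; apply Rdiv_lt_0_compat; lra).
    apply (Rmult_le_reg_r d); [lra|].
    unfold Rdiv. rewrite Rmult_assoc, Rinv_l by lra. lra. }
  unfold rhs. eapply Rle_trans; [apply Rabs_triang|]. eapply Rle_trans.
  - apply Rplus_le_compat; [apply phi_bnd; auto | apply abs_mult_le; [exact Hk | apply Rabs_triang]].
  - unfold C_rhs. nra.
Qed.

Lemma abs_lam_le : Rabs lam <= m + 1 /\ Rabs (- lam) <= m + 1.
Proof.
  pose proof lam_bounds. pose proof lam_pos.
  rewrite Rabs_Ropp, Rabs_pos_eq by lra. lra.
Qed.

Lemma sol_q_bound x : 0 <= x <= 2 * PI -> Rabs (sol_q x) <= C_q * (Np + Nv).
Proof.
  intros Hx. pose proof abs_lam_le as [A1 _]. pose proof resonance_margin_le as [D1 _].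
  unfold C_q. rewrite Rmult_assoc.
  apply per_sol_bound; auto using rhs_cont, resonance_margin_pos, rhs_bound.
Qed.

Lemma sol_f_bound x : 0 <= x <= 2 * PI -> Rabs (sol_f x) <= C_f * (Np + Nv).
Proof.
  intros Hx. pose proof abs_lam_le as [_ A2]. pose proof resonance_margin_le as [_ D2].
  unfold C_f. rewrite Rmult_assoc.
  apply per_sol_bound; auto using sol_q_cont, resonance_margin_pos, sol_q_bound.
Qed.

Lemma sol_f1_bound x : 0 <= x <= 2 * PI -> Rabs (sol_f1 x) <= C_f1 * (Np + Nv).
Proof.
  intros Hx. pose proof abs_lam_le as [_ A2].
  pose proof (sol_f_bound x Hx). pose proof (sol_q_bound x Hx).
  unfold sol_f1, C_f1. eapply Rle_trans; [apply Rabs_triang|].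
  eapply Rle_trans; [apply Rplus_le_compat; [apply abs_mult_le; eauto | eauto] | lra].
Qed.

Lemma sol_f2_bound x : 0 <= x <= 2 * PI -> Rabs (sol_f2 x) <= C_f2 * (Np + Nv).
Proof.
  intros Hx. pose proof inv_d_bounds.
  assert (Hl : Rabs (lam * lam) <= m) by (rewrite lam_sq, Rabs_pos_eq; lra).
  pose proof (sol_f_bound x Hx). pose proof (rhs_bound x Hx).
  unfold sol_f2, C_f2. eapply Rle_trans; [apply Rabs_triang|].
  eapply Rle_trans; [apply Rplus_le_compat; [apply abs_mult_le; eauto | eauto] | lra].
Qed.

Lemma damped_bound u B : Rabs u <= B -> Rabs ((1 - d) * u) <= d * B.
Proof.
  intros Hu. assert (0 <= B) by (eapply Rle_trans; [apply Rabs_pos | exact Hu]).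
  eapply Rle_trans; [apply abs_mult_le; [|exact Hu]|].
  - rewrite Rabs_minus_sym, Rabs_pos_eq by lra. apply Rle_refl.
  - nra.
Qed.

Lemma sol_g1_bound x : 0 <= x <= 2 * PI -> Rabs (sol_g1 x) <= C_g1 * (Np + Nv).
Proof.
  intros Hx. pose proof PI_RGT_0. pose proof data_bounds_nonneg as [N1 N2].
  pose proof (damped_bound _ _ (sol_f_bound x Hx)).
  pose proof (prim_varphi_bound x Hx). pose proof first_integral_const_bound.
  set (P := (4 * PI + m + 1) * (Np + Nv)).
  assert (0 <= PI * Np) by (apply Rmult_le_pos; lra).
  assert (0 <= PI * Nv) by (apply Rmult_le_pos; lra).
  assert (0 <= m * Np) by (apply Rmult_le_pos; lra).
  assert (0 <= m * Nv) by (apply Rmult_le_pos; lra).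
  assert (HP : 2 * PI * Nv + (2 * PI * Nv + (m + 1) * Np) <= P) by (unfold P; lra).
  assert (P <= d * P) by (assert (0 <= P) by (unfold P; lra); nra).
  unfold sol_g1. apply abs_div_le; [lra|].
  eapply Rle_trans; [apply abs_minus_le|].
  eapply Rle_trans; [apply Rplus_le_compat_r, abs_minus_le|].
  replace (C_g1 * (Np + Nv) * d) with (d * (C_f * (Np + Nv)) + d * P) by (unfold C_g1, P; ring).
  lra.
Qed.

Lemma sol_g2_bound x : 0 <= x <= 2 * PI -> Rabs (sol_g2 x) <= C_g2 * (Np + Nv).
Proof.
  intros Hx. pose proof data_bounds_nonneg as [N1 N2].
  pose proof (damped_bound _ _ (sol_f1_bound x Hx)). pose proof (varphi_bnd x Hx).
  unfold sol_g2. apply abs_div_le; [lra|].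
  eapply Rle_trans; [apply abs_minus_le|].
  replace (C_g2 * (Np + Nv) * d) with (d * (C_f1 * (Np + Nv)) + d * (Np + Nv)) by (unfold C_g2; ring).
  nra.
Qed.

Lemma sol_g_bound x : 0 <= x <= 2 * PI -> Rabs (sol_g x) <= C_g * (Np + Nv).
Proof.
  intros Hx. pose proof PI_RGT_0.
  assert (HG : forall y, 0 <= y <= 2 * PI -> Rabs (prim_g1 y) <= 2 * PI * (C_g1 * (Np + Nv))).
  { intros y Hy. apply primitive_bound; auto using sol_g1_cont, sol_g1_bound. }
  assert (Hmean : Rabs (RInt prim_g1 0 (2 * PI) / (2 * PI)) <= 2 * PI * (C_g1 * (Np + Nv))).
  { apply abs_div_le; [lra|].
    eapply Rle_trans; [apply abs_RInt_le_const; [lra | apply ex_RInt_cont, prim_g1_cont | exact HG] |].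
    lra. }
  unfold sol_g, C_g. eapply Rle_trans; [apply abs_minus_le|].
  pose proof (HG x Hx). lra.
Qed.

End Bounds.

Lemma construction_solves :
  solves m d phi varphi sol_f sol_f1 sol_f2 sol_g sol_g1 sol_g2.
Proof.
  assert (Hder : forall f f' : R -> R, (forall x, is_derive f x (f' x)) ->
            forall x, derivable_pt_lim f x (f' x))
    by (intros f f' H x; apply is_derive_Reals, H).
  repeat split; try (apply cc_of_continuous); intros;
    auto using sol_f_cont, sol_f1_cont, sol_f2_cont, sol_g_cont, sol_g1_cont, sol_g2_cont,
      sol_f_derive, sol_f1_derive, sol_g_derive, sol_g1_derive,
      sol_eq1, sol_eq2, sol_f_periodic, sol_f1_periodic, sol_g_periodic, sol_g1_periodic.
  assert (Hex : ex_RInt sol_g 0 (2 * PI)) by (apply ex_RInt_cont, sol_g_cont).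
  exists (ex_RInt_Reals_0 _ _ _ Hex). rewrite <- RInt_Reals. apply sol_g_integral.
Qed.

Lemma construction_C2_bound :
  C2_norm sol_f sol_f1 sol_f2 0 (2 * PI) + C2_norm sol_g sol_g1 sol_g2 0 (2 * PI)
  <= C_total * (C0_norm phi 0 (2 * PI) + C0_norm varphi 0 (2 * PI)).
Proof.
  set (Np := C0_norm phi 0 (2 * PI)). set (Nv := C0_norm varphi 0 (2 * PI)).
  pose proof (C0_norm_ge phi phi_cont) as Bp. pose proof (C0_norm_ge varphi varphi_cont) as Bv.
  assert (Hp2 : 0 <= 2 * PI) by (pose proof PI_RGT_0; lra).
  unfold C2_norm.
  pose proof (sup_abs_le _ _ _ _ Hp2 (sol_f_bound Np Nv Bp Bv)).
  pose proof (sup_abs_le _ _ _ _ Hp2 (sol_f1_bound Np Nv Bp Bv)).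
  pose proof (sup_abs_le _ _ _ _ Hp2 (sol_f2_bound Np Nv Bp Bv)).
  pose proof (sup_abs_le _ _ _ _ Hp2 (sol_g_bound Np Nv Bp Bv)).
  pose proof (sup_abs_le _ _ _ _ Hp2 (sol_g1_bound Np Nv Bp Bv)).
  pose proof (sup_abs_le _ _ _ _ Hp2 (sol_g2_bound Np Nv Bp Bv)).
  unfold C_total. lra.
Qed.

End Construction.

Section Homogeneous.

Variables (m d : R) (F F1 F2 G G1 G2 : R -> R).
Hypothesis hm : 1 < m.
Hypothesis hd : m + 2 <= d.
Hypothesis F_cc : cont_on_cc F 0 (2 * PI).
Hypothesis F1_cc : cont_on_cc F1 0 (2 * PI).
Hypothesis G_cc : cont_on_cc G 0 (2 * PI).
Hypothesis G1_cc : cont_on_cc G1 0 (2 * PI).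
Hypothesis derivs : forall x, 0 < x < 2 * PI ->
  is_derive F x (F1 x) /\ is_derive F1 x (F2 x) /\ is_derive G x (G1 x) /\ is_derive G1 x (G2 x).
Hypothesis eqs : forall x, 0 < x < 2 * PI ->
  - (m + 1) * F x + (F2 x - G1 x) + d * (F x + G1 x) = 0 /\
  G x + (F1 x - G x) - d * (F1 x + G2 x) = 0.
Hypothesis F_per : F 0 = F (2 * PI).
Hypothesis F1_per : F1 0 = F1 (2 * PI).
Hypothesis G_per : G 0 = G (2 * PI).
Hypothesis G_mean : RInt G 0 (2 * PI) = 0.

Let l := lam m d.

Lemma two_pi_pos : 0 < 2 * PI.
Proof. pose proof PI_RGT_0; lra. Qed.

(* Integrating the second equation: (1 - d) F - d G' is constant. *)
Definition hom_K1 : R := (1 - d) * F 0 - d * G1 0.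

Lemma hom_first_integral x : 0 <= x <= 2 * PI -> (1 - d) * F x - d * G1 x = hom_K1.
Proof.
  intros Hx. pose proof two_pi_pos. unfold hom_K1.
  apply (zero_derivative_const (fun x => (1 - d) * F x - d * G1 x) 0 (2 * PI));
    [lra | | | exact Hx | lra].
  - intros y Hy. destruct (derivs y Hy) as (d1 & d2 & d3 & d4). eapply derive_eq.
    + apply derive_minus; apply is_derive_scal; eauto.
    + destruct (eqs y Hy) as [_ e2]. lra.
  - apply cc_minus; apply cc_scal; auto.
Qed.

(* Eliminating G' from the first equation: F'' = l^2 F + k. *)
Definition hom_k : R := (d - 1) * hom_K1 / d.

Lemma hom_reduced x : 0 < x < 2 * PI -> F2 x = l * l * F x + hom_k.
Proof.
  intros Hx. destruct (eqs x Hx) as [e1 _].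
  assert (E : G1 x = ((1 - d) * F x - hom_K1) / d).
  { rewrite <- (hom_first_integral x) by lra. field. lra. }
  assert (F2 x = (m + 1) * F x + G1 x - d * (F x + G1 x)) by lra.
  unfold l. rewrite H, E, lam_sq by auto. unfold hom_k. field. lra.
Qed.

(* U = F + k / l^2 solves U'' = l^2 U, so U' -+ l U solve y' = -+ l y; these are
   periodic, hence vanish, and F is the constant - k / l^2. *)
Lemma hom_F_const x : 0 <= x <= 2 * PI -> F x = - hom_k / (l * l).
Proof.
  intros Hx. pose proof (lam_pos m d hm hd) as Hl. fold l in Hl.
  assert (Hll : 0 < l * l) by nra.
  set (U := fun x => F x + hom_k / (l * l)).
  assert (U_cc : cont_on_cc U 0 (2 * PI)) by (apply cc_plus; auto; apply cc_const).
  assert (Hmode : forall s, s * s = 1 -> forall x, 0 <= x <= 2 * PI -> F1 x + s * l * U x = 0).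
  { intros s Hs. apply (periodic_exp_solution_zero _ (s * l)).
    - intros E. apply Rmult_integral in E. destruct E; subst; lra.
    - apply cc_plus; auto. apply cc_scal; auto.
    - intros y Hy. destruct (derivs y Hy) as (d1 & d2 & _).
      eapply derive_eq.
      + apply derive_plus; [eauto | apply is_derive_scal, derive_plus; [eauto | apply derive_const]].
      + rewrite (hom_reduced y Hy). unfold U.
        replace (s * l * (F1 y + s * l * (F y + hom_k / (l * l))))
          with (s * l * F1 y + s * s * (l * l * F y + hom_k)) by (field; lra).
        rewrite Hs. ring.
    - unfold U. rewrite F1_per, F_per. reflexivity. }
  pose proof (Hmode 1 ltac:(ring) x Hx). pose proof (Hmode (-1) ltac:(ring) x Hx).
  assert (U x = 0) by nra. unfold U in H1. unfold Rdiv in *. lra.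
Qed.

(* Then G' is a constant gam; periodicity of G forces gam = 0, hence k = 0. *)
Definition hom_gam : R := ((1 - d) * (- hom_k / (l * l)) - hom_K1) / d.

Lemma hom_G1_const x : 0 <= x <= 2 * PI -> G1 x = hom_gam.
Proof.
  intros Hx. unfold hom_gam. rewrite <- (hom_F_const x Hx), <- (hom_first_integral x Hx).
  field. lra.
Qed.

Lemma hom_gam_zero : hom_gam = 0.
Proof.
  pose proof two_pi_pos.
  assert (HT : forall x y, 0 <= x <= 2 * PI -> 0 <= y <= 2 * PI ->
            G x - hom_gam * x = G y - hom_gam * y).
  { apply zero_derivative_const; [lra | |].
    - intros y Hy. destruct (derivs y Hy) as (_ & _ & d3 & _). eapply derive_eq.
      + apply derive_minus; [eauto | apply is_derive_scal, is_derive_id].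
      + rewrite hom_G1_const by lra. unfold one; simpl. ring.
    - apply cc_minus; auto. apply cc_scal, cc_of_continuous. intros; apply continuous_id. }
  pose proof (HT 0 (2 * PI) ltac:(lra) ltac:(lra)). rewrite G_per in H0. nra.
Qed.

Lemma hom_k_zero : hom_k = 0.
Proof.
  pose proof hom_gam_zero as Hg. pose proof (inv_d_bounds m d hm hd).
  assert (Hpos : 0 < d * (m - 1) + 1) by nra.
  assert (Heq : hom_gam = hom_K1 * (d - 1 - m) / (d * (m - 1) + 1)).
  { unfold hom_gam, hom_k, l. rewrite lam_sq by auto. field. repeat split; lra. }
  rewrite Heq in Hg.
  assert (HK : hom_K1 = 0).
  { apply (Rmult_eq_reg_r ((d - 1 - m) / (d * (m - 1) + 1))).
    - rewrite Rmult_0_l. rewrite <- Hg. unfold Rdiv. ring.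
    - apply Rmult_integral_contrapositive; split; [lra | apply Rinv_neq_0_compat; lra]. }
  unfold hom_k. rewrite HK. unfold Rdiv. ring.
Qed.

Lemma homogeneous_zero x : 0 <= x <= 2 * PI -> F x = 0 /\ G x = 0.
Proof.
  intros Hx. pose proof two_pi_pos. split.
  - rewrite hom_F_const, hom_k_zero by auto. unfold Rdiv. ring.
  - assert (HG : forall y, 0 <= y <= 2 * PI -> G y = G 0).
    { intros y Hy. apply (zero_derivative_const G 0 (2 * PI)); [lra | | auto | exact Hy | lra].
      intros z Hz. destruct (derivs z Hz) as (_ & _ & d3 & _).
      rewrite (hom_G1_const z), hom_gam_zero in d3 by lra. exact d3. }
    assert (Hint : RInt G 0 (2 * PI) = RInt (fun _ => G 0) 0 (2 * PI)).
    { apply (RInt_ext (V:=R_CompleteNormedModule)). intros y Hy.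
      rewrite Rmin_left, Rmax_right in Hy by lra. apply HG; lra. }
    rewrite G_mean, RInt_constR in Hint. rewrite HG by auto. nra.
Qed.

End Homogeneous.

(* Two solutions of the system differ by a solution of the homogeneous one. *)
Lemma solves_unique m d phi varphi : 1 < m -> m + 2 <= d ->
  forall f f1 f2 g g1 g2 f' f1' f2' g' g1' g2' : R -> R,
  solves m d phi varphi f f1 f2 g g1 g2 ->
  solves m d phi varphi f' f1' f2' g' g1' g2' ->
  forall x, 0 <= x <= 2 * PI -> f x = f' x /\ g x = g' x.
Proof.
  intros hm hd f f1 f2 g g1 g2 f' f1' f2' g' g1' g2' S S' x Hx.
  destruct S as ((c1 & c2 & _ & dfs) & (c4 & c5 & _ & dgs) & eqs & b1 & b2 & b3 & b4 & [pg Hpg]).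
  destruct S' as ((c1' & c2' & _ & dfs') & (c4' & c5' & _ & dgs') & eqs' & b1' & b2' & b3' & b4'
                  & [pg' Hpg']).
  destruct (homogeneous_zero m d (fun x => f x - f' x) (fun x => f1 x - f1' x)
              (fun x => f2 x - f2' x) (fun x => g x - g' x) (fun x => g1 x - g1' x)
              (fun x => g2 x - g2' x)) with x as [Z1 Z2]; auto using cc_minus; try lra.
  - intros y Hy. destruct (dfs y Hy), (dfs' y Hy), (dgs y Hy), (dgs' y Hy).
    split; [|split; [|split]]; apply derive_minus; apply is_derive_Reals; auto.
  - intros y Hy. destruct (eqs y Hy), (eqs' y Hy). split; lra.
  - rewrite RInt_minusR, (RInt_Reals _ _ _ pg), (RInt_Reals _ _ _ pg'), Hpg, Hpg'.
    + apply Rminus_0_r.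
    + apply ex_RInt_Reals_1; auto.
    + apply ex_RInt_Reals_1; auto.
Qed.

Theorem lemmaA3 (m : R) (hm : 1 < m) :
  exists D0 C : R, 0 < D0 /\ 0 < C /\
  forall (d : R) (phi varphi : R -> R),
    D0 <= d ->
    continuity phi -> continuity varphi ->
    periodic2pi phi -> periodic2pi varphi ->
    (exists pr : Riemann_integrable varphi 0 (2 * PI), RiemannInt pr = 0) ->
    (exists f f1 f2 g g1 g2 : R -> R,
        solves m d phi varphi f f1 f2 g g1 g2 /\
        C2_norm f f1 f2 0 (2 * PI) + C2_norm g g1 g2 0 (2 * PI)
          <= C * (C0_norm phi 0 (2 * PI) + C0_norm varphi 0 (2 * PI))) /\
    (forall f f1 f2 g g1 g2 f' f1' f2' g' g1' g2' : R -> R,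
        solves m d phi varphi f f1 f2 g g1 g2 ->
        solves m d phi varphi f' f1' f2' g' g1' g2' ->
        forall x, 0 <= x <= 2 * PI -> f x = f' x /\ g x = g' x).
Proof.
  exists (m + 2), (C_total m). split; [lra | split; [apply C_total_pos; auto |]].
  intros d phi varphi hd Hphi Hvarphi _ _ [pr Hmean].
  assert (phi_cont : forall x, continuous phi x) by (intros; apply continuity_pt_filterlim, Hphi).
  assert (varphi_cont : forall x, continuous varphi x)
    by (intros; apply continuity_pt_filterlim, Hvarphi).
  assert (varphi_mean : RInt varphi 0 (2 * PI) = 0) by (rewrite (RInt_Reals _ _ _ pr); auto).
  split.
  - exists (sol_f m d phi varphi), (sol_f1 m d phi varphi), (sol_f2 m d phi varphi),
      (sol_g m d phi varphi), (sol_g1 m d phi varphi), (sol_g2 m d phi varphi).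
    split; [apply construction_solves | apply construction_C2_bound]; auto.
  - apply solves_unique; auto.
Qed.
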